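(* Let $N$ and $M$ be matroids on a common finite ground set $E$ such that every independent set of $M$ is independent in $N$. Then $N\ominus M=(N^*\vee M)^*$, i.e. the independent sets of $N\ominus M$ are exactly the independent sets of $(N^*\vee M)^*$.
   Context: For matroids $N,M$ on the same ground set $E$ with $\mathcal{L}(M)\subseteq\mathcal{L}(N)$, $N\ominus M=(E,\mathcal{L}(N\ominus M))$ where $\mathcal{L}(N\ominus M)=\{S: \exists$ a base $B_N$ of $N$ and a base $B_M$ of $M$ with $B_M\subseteq B_N$ and $S\subseteq B_N\setminus B_M\}$. The dual $N^*$ of a matroid $N$ on $E$ has as independent sets the subsets of $E\setminus B$ for bases $B$ of $N$. The union $A\vee B$ of matroids $A,B$ has ground set $E(A)\cup E(B)$ and independent sets $\{S\cup T: S\in\mathcal{L}(A),\ T\in\mathcal{L}(B)\}$. *)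

From mathcomp Require Import all_boot.
Set Implicit Arguments. Unset Strict Implicit. Unset Printing Implicit Defensive.

(* A matroid on the finite ground set E = [set: T], given by its family of
   independent sets. *)
Record matroid (T : finType) := Matroid {
  indep : {set {set T}};
  indep0 : set0 \in indep;
  indep_sub : forall A B : {set T}, B \in indep -> A \subset B -> A \in indep;
  indep_aug : forall A B : {set T}, A \in indep -> B \in indep ->
      #|A| < #|B| -> exists2 x, x \in B :\: A & x |: A \in indep
}.

Section Ops.
Variable T : finType.

Definition bases (I : {set {set T}}) : {set {set T}} :=
  [set B in I | [forall A in I, (B \subset A) ==> (A == B)]].

Definition dual_indep (I : {set {set T}}) : {set {set T}} :=
  [set S : {set T} | [exists B in bases I, S \subset ~: B]].

Definition union_indep (I1 I2 : {set {set T}}) : {set {set T}} :=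
  [set S : {set T} | [exists X in I1, exists Y in I2, S == X :|: Y]].

Definition ominus_indep (IN IM : {set {set T}}) : {set {set T}} :=
  [set S : {set T} | [exists BN in bases IN, exists BM in bases IM,
     (BM \subset BN) && (S \subset BN :\: BM)]].
End Ops.

From mathcomp Require Import all_boot.
Set Implicit Arguments. Unset Strict Implicit.

(* All bases of a matroid have the same size, and every independent set
   extends to a base inside its union with any given base.  For bases B_M of
   M and B_N of N with B_M inside B_N, the set ~: B_N :|: B_M has the largest
   possible size #|~: B_N| + #|B_M| of a member of N^* \/ M, so it is a base
   of the union, with complement B_N :\: B_M.  Conversely a base C = X :|: Y
   of the union, with X disjoint from a base of N and Y independent in M, can
   be inflated, without changing C, first by extending Y to a base B_M of M
   and then by extending B_M to a base B_N of N; the maximality of C forces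
   C = ~: B_N :|: B_M at both stages. *)

Section Bases.
Variables (T : finType) (I : {set {set T}}).

Lemma bases_mem B : B \in bases I -> B \in I.
Proof. by rewrite inE => /andP[]. Qed.

Lemma bases_maximal B A : B \in bases I -> A \in I -> B \subset A -> A = B.
Proof. by rewrite inE => /andP[_ /forall_inP maxB] /maxB /implyP maxBA /maxBA/eqP. Qed.

Lemma max_card_bases K :
  K \in I -> (forall K', K' \in I -> #|K'| <= #|K|) -> K \in bases I.
Proof.
move=> IK maxK; rewrite inE IK; apply/forall_inP => A IA; apply/implyP => sKA.
by rewrite eq_sym eqEcard sKA maxK.
Qed.

End Bases.

Section MatroidBases.
Variables (T : finType) (M : matroid T).

Lemma card_indep_le_base A B :
  A \in indep M -> B \in bases (indep M) -> #|A| <= #|B|.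
Proof.
move=> IA baseB; rewrite leqNgt; apply/negP => ltBA.
have [x /setDP[_ xNB] IxB] := indep_aug (bases_mem baseB) IA ltBA.
have /setP/(_ x) := bases_maximal baseB IxB (subsetUr _ _).
by rewrite setU11 (negbTE xNB).
Qed.

Lemma card_bases_eq B B' :
  B \in bases (indep M) -> B' \in bases (indep M) -> #|B| = #|B'|.
Proof.
move=> baseB baseB'; apply/eqP; rewrite eqn_leq.
by rewrite (card_indep_le_base (bases_mem baseB)) ?(card_indep_le_base (bases_mem baseB')).
Qed.

Lemma indep_extend_base A B : A \in indep M -> B \in bases (indep M) ->
  exists2 B', B' \in bases (indep M) & A \subset B' /\ B' \subset A :|: B.
Proof.
move=> IA baseB.
pose P K := [&& K \in indep M, A \subset K & K \subset A :|: B].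
have PA : P A by rewrite /P IA subxx subsetUl.
have [K /and3P[IK sAK sKAB] maxK] := arg_maxnP (fun K : {set T} => #|K|) PA.
have leBK : #|B| <= #|K|.
  rewrite leqNgt; apply/negP => ltKB.
  have [x /setDP[xB xNK] IxK] := indep_aug IK (bases_mem baseB) ltKB.
  have PxK : P (x |: K).
    by rewrite /P IxK (subset_trans sAK (subsetUr _ _)) subUset sub1set inE xB orbT.
  by have := maxK _ PxK; rewrite cardsU1 xNK /= ltnn.
exists K; last by [].
apply: max_card_bases => // K' IK'.
exact: leq_trans (card_indep_le_base IK' baseB) leBK.
Qed.

Lemma exists_base : exists B, B \in bases (indep M).
Proof.
have [K IK maxK] := arg_maxnP (fun K : {set T} => #|K|) (indep0 M).
by exists K; apply: max_card_bases.
Qed.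

End MatroidBases.

Section DualUnion.
Variable T : finType.

Lemma dual_indep_compl_base (I : {set {set T}}) B :
  B \in bases I -> ~: B \in dual_indep I.
Proof. by move=> baseB; rewrite inE; apply/exists_inP; exists B. Qed.

Lemma union_indepU (I1 I2 : {set {set T}}) X Y :
  X \in I1 -> Y \in I2 -> X :|: Y \in union_indep I1 I2.
Proof.
by move=> I1X I2Y; rewrite inE; apply/exists_inP; exists X => //; apply/exists_inP; exists Y.
Qed.

Variables N M : matroid T.
Let U := union_indep (dual_indep (indep N)) (indep M).

Lemma union_indep_compl_base BN BM :
  BN \in bases (indep N) -> BM \in indep M -> ~: BN :|: BM \in U.
Proof. by move=> baseBN IBM; apply: union_indepU => //; apply: dual_indep_compl_base. Qed.

Lemma card_union_indep_le Z BN BM :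
  BN \in bases (indep N) -> BM \in bases (indep M) -> Z \in U ->
  #|Z| <= #|~: BN| + #|BM|.
Proof.
move=> baseBN baseBM; rewrite inE => /exists_inP[X].
rewrite inE => /exists_inP[B baseB sXB] /exists_inP[Y IY /eqP->].
have eqC : #|~: B| = #|~: BN|.
  by apply/(@addnI #|B|); rewrite cardsC (card_bases_eq baseB baseBN) cardsC.
apply: leq_trans (leq_card_setU X Y) _.
by rewrite -eqC leq_add ?(subset_leq_card sXB) ?(card_indep_le_base IY baseBM).
Qed.

Lemma compl_base_union_bases BN BM :
  BN \in bases (indep N) -> BM \in bases (indep M) -> BM \subset BN ->
  ~: BN :|: BM \in bases U.
Proof.
move=> baseBN baseBM sBMBN.
apply: max_card_bases => [|Z UZ]; first exact: union_indep_compl_base (bases_mem baseBM).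
have /eqP-> : #|~: BN :|: BM| == #|~: BN| + #|BM|.
  by rewrite (leq_card_setU _ _).2 disjoint_sym disjoints_subset setCK.
exact: card_union_indep_le baseBN baseBM UZ.
Qed.

Hypothesis sMN : indep M \subset indep N.

Lemma union_bases_compl_base C : C \in bases U ->
  exists BN BM : {set T}, [/\ BN \in bases (indep N), BM \in bases (indep M),
                             BM \subset BN & C = ~: BN :|: BM].
Proof.
move=> baseC; have := bases_mem baseC.
rewrite inE => /exists_inP[X]; rewrite inE => /exists_inP[B baseB sXB].
move=> /exists_inP[Y IY /eqP eqC].
have [BM0 baseBM0] := exists_base M.
have [BM baseBM [sYBM _]] := indep_extend_base IY baseBM0.
have eqC1 : C = ~: B :|: BM.
  apply/esym/(bases_maximal baseC); first exact: union_indep_compl_base (bases_mem _).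
  by rewrite eqC setUSS.
have [BN baseBN [sBMBN sBN]] := indep_extend_base (subsetP sMN _ (bases_mem baseBM)) baseB.
exists BN, BM; split=> //.
apply/esym/(bases_maximal baseC); first exact: union_indep_compl_base (bases_mem _).
by rewrite eqC1 subUset subsetUr andbT -setCD setCS subDset.
Qed.

End DualUnion.

Theorem theorem3p4p2 (T : finType) (N M : matroid T) :
  indep M \subset indep N ->
  ominus_indep (indep N) (indep M) =
  dual_indep (union_indep (dual_indep (indep N)) (indep M)).
Proof.
move=> sMN; apply/setP => S; rewrite !inE; apply/idP/idP.
- case/exists_inP => BN baseBN /exists_inP[BM baseBM /andP[sBMBN sS]].
  apply/exists_inP; exists (~: BN :|: BM); first exact: compl_base_union_bases.
  by rewrite setCU setCK -setDE.
- case/exists_inP => C /(union_bases_compl_base sMN)[BN [BM [baseBN baseBM sBMBN ->]]] sS.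
  apply/exists_inP; exists BN => //; apply/exists_inP; exists BM => //.
  by rewrite sBMBN (subset_trans sS) // setCU setCK setDE.
Qed.
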